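(* Let $\mathcal{Q}$ be a set of queries and $\mathcal{R}$ a set of rule sets, equipped with a semantic distance $d_{\text{sem}}$ (on $\mathcal{Q}$ and on $\mathcal{R}$) satisfying the axioms of a metric. Let $E$ be an encoder mapping queries and rule sets to vectors in a Euclidean space, and suppose there is a constant $C>0$ such that $d_{\text{sem}}(A,B)\le C\,\|E(A)-E(B)\|$ for all queries $A,B$ and for all rule sets $A,B$. Let $\Psi:\mathcal{Q}\to\mathcal{R}$ be $L_\Psi$-Lipschitz with respect to $d_{\text{sem}}$, i.e. $d_{\text{sem}}(\Psi(q),\Psi(q'))\le L_\Psi\, d_{\text{sem}}(q,q')$ for some $L_\Psi\ge 0$, and set $\text{Dist}=d_{\text{sem}}$ on $\mathcal{R}$. Let $\mathcal{C}_k$ be a finite set of samples $i$, each consisting of a query $q_i\in\mathcal{Q}$ and a rule set $\mathcal{R}_i\in\mathcal{R}$, with $\mathcal{R}_i^{LLM}=\Psi(q_i)$ and cognitive gap $g_i=\text{Dist}(\mathcal{R}_i^{LLM},\mathcal{R}_i)$. Suppose the cluster has diameter $\epsilon>0$ in the concatenated embedding space, i.e. $\|(E(q_i)\oplus E(\mathcal{R}_i))-(E(q_j)\oplus E(\mathcal{R}_j))\|<\epsilon$ for all $i,j\in\mathcal{C}_k$. Then the intra-cluster variance of the cognitive gap satisfies $$\text{Var}(g_i)<[C\cdot(1+L_\Psi)\cdot\epsilon]^2.$$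
   Context: $\oplus$ denotes vector concatenation and $\|\cdot\|$ the Euclidean norm. $\Psi$ models the LLM's rule-generation function, which, given a query, produces a predicted rule set. $\text{Var}(g_i)$ denotes the variance of the values $g_i$ over the samples $i\in\mathcal{C}_k$ (uniform empirical distribution on the cluster). *)

From HB Require Import structures.
From mathcomp Require Import all_boot all_order all_algebra.
Set Implicit Arguments. Unset Strict Implicit. Unset Printing Implicit Defensive.
Import Order.TTheory GRing.Theory Num.Theory.
Local Open Scope ring_scope.

Definition is_metric (R : realDomainType) (T : Type) (d : T -> T -> R) : Prop :=
  [/\ (forall x y, 0 <= d x y),
      (forall x y, d x y = 0 <-> x = y),
      (forall x y, d x y = d y x)
    & (forall x y z, d x z <= d x y + d y z)].

Definition enorm (R : rcfType) (n : nat) (v : 'rV[R]_n) : R :=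
  Num.sqrt (\sum_(i < n) v 0 i ^+ 2).

Definition vconcat (R : rcfType) (n m : nat) (u : 'rV[R]_n) (v : 'rV[R]_m)
  : 'rV[R]_(n + m) := row_mx u v.

Definition emean (R : realFieldType) (I : finType) (g : I -> R) : R :=
  (\sum_(i : I) g i) / #|I|%:R.

Definition evar (R : realFieldType) (I : finType) (g : I -> R) : R :=
  (\sum_(i : I) (g i - emean g) ^+ 2) / #|I|%:R.

(* The cognitive gap g_i = d(Psi q_i, R_i) is 1-Lipschitz in the pair (Psi q_i, R_i) by the
   triangle inequality, so two samples of the cluster have gaps differing by less than
   L_Psi d(q_i, q_j) + d(R_i, R_j) < C (1 + L_Psi) eps, both distances being controlled by the
   corresponding blocks of the concatenated embedding. Every gap is then within C (1 + L_Psi) eps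
   of their mean, and so is the root mean square deviation. *)
From HB Require Import structures.
From mathcomp Require Import all_boot all_order all_algebra.
From mathcomp Require Import lra.
Set Implicit Arguments. Unset Strict Implicit.
Import Order.TTheory GRing.Theory Num.Theory.
Local Open Scope ring_scope.

Section EmpiricalMean.
Variables (R : realFieldType) (I : finType).
Hypothesis I_gt0 : (0 < #|I|)%N.

Lemma emean_cst (c : R) : emean (fun _ : I => c) = c.
Proof. by rewrite /emean sumr_const -[c *+ _]mulr_natr mulfK // pnatr_eq0 -lt0n. Qed.

Lemma ltr_emean (f h : I -> R) : (forall i, f i < h i) -> emean f < emean h.
Proof.
move=> lt_fh; rewrite /emean ltr_pM2r ?invr_gt0 ?ltr0n //.
apply: ltr_sum => [|i _]; last exact: lt_fh.
by case/card_gt0P: I_gt0 => i _; apply/hasP; exists i; rewrite ?mem_index_enum.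
Qed.

Lemma evar_lt_sqr (g : I -> R) (K : R) :
  (forall i j, g i - g j < K) -> evar g < K ^+ 2.
Proof.
move=> gap; rewrite -[K ^+ 2](emean_cst (K ^+ 2)).
apply: ltr_emean => i.
have mean_lt : emean g < g i + K.
  by rewrite -(emean_cst (g i + K)); apply: ltr_emean => j; have := gap j i; lra.
have mean_gt : g i - K < emean g.
  by rewrite -(emean_cst (g i - K)); apply: ltr_emean => j; have := gap i j; lra.
nra.
Qed.

End EmpiricalMean.

Lemma metric_quadrangle (R : realDomainType) (T : Type) (d : T -> T -> R) :
  is_metric d -> forall u v x y, d u x - d v y <= d u v + d x y.
Proof.
case=> _ _ dC dtri u v x y.
have := dtri u v x; have := dtri v y x; rewrite (dC y x); lra.
Qed.

Section ConcatNorm.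
Variables (R : rcfType) (n m : nat).
Implicit Types (u : 'rV[R]_n) (v : 'rV[R]_m).

Lemma enorm_row_mxl u v : enorm u <= enorm (row_mx u v).
Proof.
rewrite /enorm ler_sqrt ?sumr_ge0 // ?big_split_ord /=; last by move=> i _; exact: sqr_ge0.
under [X in _ <= X + _]eq_bigr => i _ do rewrite row_mxEl.
by rewrite lerDl sumr_ge0 // => i _; exact: sqr_ge0.
Qed.

Lemma enorm_row_mxr u v : enorm v <= enorm (row_mx u v).
Proof.
rewrite /enorm ler_sqrt ?sumr_ge0 // ?big_split_ord /=; last by move=> i _; exact: sqr_ge0.
under [X in _ <= _ + X]eq_bigr => i _ do rewrite row_mxEr.
by rewrite lerDr sumr_ge0 // => i _; exact: sqr_ge0.
Qed.

Lemma vconcatB u v u' v' : vconcat u v - vconcat u' v' = row_mx (u - u') (v - v').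
Proof. by rewrite /vconcat opp_row_mx add_row_mx. Qed.

End ConcatNorm.

Lemma dist_lt_of_embedding (R : rcfType) (T : Type) (n : nat) (d : T -> T -> R)
    (E : T -> 'rV[R]_n) (C eps : R) :
  0 < C -> (forall a b, d a b <= C * enorm (E a - E b)) ->
  forall a b, enorm (E a - E b) < eps -> d a b < C * eps.
Proof. by move=> C_gt0 dE a b lt_eps; apply: le_lt_trans (dE a b) _; rewrite ltr_pM2l. Qed.

Theorem theorem2
  (R : rcfType) (Q RS : Type) (n : nat)
  (dQ : Q -> Q -> R) (dR : RS -> RS -> R)
  (hdQ : is_metric dQ) (hdR : is_metric dR)
  (EQ : Q -> 'rV[R]_n) (ER : RS -> 'rV[R]_n)
  (C : R) (hC : 0 < C)
  (hEQ : forall a b : Q, dQ a b <= C * enorm (EQ a - EQ b))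
  (hER : forall a b : RS, dR a b <= C * enorm (ER a - ER b))
  (Psi : Q -> RS) (LPsi : R) (hL : 0 <= LPsi)
  (hPsi : forall q q' : Q, dR (Psi q) (Psi q') <= LPsi * dQ q q')
  (I : finType) (hI : (0 < #|I|)%N)
  (q : I -> Q) (r : I -> RS)
  (eps : R) (heps : 0 < eps)
  (hdiam : forall i j : I,
     enorm (vconcat (EQ (q i)) (ER (r i)) - vconcat (EQ (q j)) (ER (r j))) < eps) :
  let g := fun i : I => dR (Psi (q i)) (r i) in
  evar g < (C * (1 + LPsi) * eps) ^+ 2.
Proof.
cbv zeta; set g := fun i : I => dR (Psi (q i)) (r i).
apply: evar_lt_sqr => // i j.
have block_lt := hdiam i j; rewrite vconcatB in block_lt.
have dq_lt : dQ (q i) (q j) < C * eps.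
  by apply: dist_lt_of_embedding hC hEQ _ _ (le_lt_trans (enorm_row_mxl _ _) block_lt).
have dr_lt : dR (r i) (r j) < C * eps.
  by apply: dist_lt_of_embedding hC hER _ _ (le_lt_trans (enorm_row_mxr _ _) block_lt).
have gap_le : g i - g j <= LPsi * dQ (q i) (q j) + dR (r i) (r j).
  by apply: le_trans (metric_quadrangle hdR _ _ _ _) _; rewrite lerD2r.
apply: (le_lt_trans gap_le).
rewrite mulrDr mulr1 mulrDl addrC ltr_leD // [C * LPsi]mulrC -mulrA.
by rewrite ler_wpM2l // ltW.
Qed.
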